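(* Let $N\ge2$, $n=2^N-1$, $\lambda,\tau\in[-1,1]$, and let $\hat T_\mu$ ($\mu\in\{0,1\}^N$) be as in the context. Define $$\phi^{(\lambda)}_\mu=\begin{pmatrix}1&\mathbf 0\\ \mathbf 0&\lambda\hat T_\mu\end{pmatrix},\qquad E^{(\tau)}_\mu=2^{-N}\begin{pmatrix}1&\mathbf 0\\ \mathbf 0&\tau\hat T_\mu\end{pmatrix},$$ let $\mathcal T=\{\mathrm{diag}(1,\hat T):\hat T\in\mathrm{SO}(n)\}$, and let $\Omega_{AB}$ be the convex hull of $\Omega_A\otimes_{\min}\Omega_B$ and $\{T\phi^{(\lambda)}_{\mathbf 0}T'^{\mathrm t}:T,T'\in\mathcal T\}$. Then $\sum_\mu E^{(\tau)}_\mu=u\otimes u$, and: (a) if $E^{(\tau)}_{\mathbf 0}\in\mathcal E_{AB}$, then $-\frac{1}{2^N-1}\le\lambda\tau\le\frac{1}{2^N-3}$; (b) for all $x,y\in\{0,1\}^N$, $E^{(\tau)}_y\cdot\phi^{(\lambda)}_x=\lambda\tau\,\delta_{y,x}+2^{-N}(1-\lambda\tau)$, and with uniform messages $p_x=2^{-N}$, encoding states $\phi^{(\lambda)}_x$ and measurement $\{E^{(\tau)}_y\}$, the mutual information is $$I(X:Y)=N-h(P)-(1-P)\log_2(2^N-1),\qquad P=2^{-N}\big(1+(2^N-1)\lambda\tau\big),$$ where $h(p)=-p\log_2p-(1-p)\log_2(1-p)$.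
   Context: The $n$-dimensional hypersphere theory has state space $\Omega_n=\{(1,r)^{\mathrm t}: r\in\mathbb R^n,\ \lVert r\rVert\le1\}$, unit effect $u=(1,\mathbf 0)^{\mathrm t}$; $\Omega_A=\Omega_B=\Omega_n$. Bipartite states are real $(n+1)\times(n+1)$ matrices, identified with $\mathbb R^{n+1}\otimes\mathbb R^{n+1}$ via $v\otimes w=vw^{\mathrm t}$, inner product $X\cdot Y=\mathrm{Tr}(X^{\mathrm t}Y)$; $\Omega_A\otimes_{\min}\Omega_B$ is the convex hull of product states; $\mathcal E_{AB}=\{E:0\le E\cdot\phi\le1\ \forall\phi\in\Omega_{AB}\}$. Coordinates of $\mathbb R^{2^N}$ are indexed by $\nu\in\{0,1\}^N$ with $\nu=\mathbf 0$ first; $(d_\mu)_\nu=(-1)^{\mu\cdot\nu}$ ($\mu\cdot\nu$ = inner product mod 2); $\mathrm{diag}(d_\mu)=\mathrm{diag}(1,\hat T_\mu)$ defines the diagonal $n\times n$ matrix $\hat T_\mu$ with $\pm1$ entries. $I(X:Y)=\sum_{x,y}p(x,y)\log_2\frac{p(x,y)}{p(x)p(y)}$. *)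

From Stdlib Require Import Reals Lra Lia.
Open Scope R_scope.

Fixpoint sumR (n : nat) (f : nat -> R) : R :=
  match n with O => 0 | S k => sumR k f + f k end.

(* real matrices / vectors as functions of (nat) indices; only the entries
   with indices < dimension are ever used *)
Definition Mat := nat -> nat -> R.
Definition Vec := nat -> R.

Definition hsdim (N : nat) : nat := Nat.pow 2 N.
Definition hsn (N : nat) : nat := (Nat.pow 2 N - 1)%nat.

(* bit strings nu in {0,1}^N are encoded by naturals < 2^N, nu_k = testbit nu k;
   nu = 0 (the zero string) is coordinate 0. *)
Fixpoint bcount (N k : nat) : nat :=
  match N with O => O | S M => (bcount M k + (if Nat.testbit k M then 1 else 0))%nat end.

Definition bdot (N mu nu : nat) : bool := Nat.odd (bcount N (Nat.land mu nu)).

Definition dvec (N mu nu : nat) : R := if bdot N mu nu then -1 else 1.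

(* hat T_mu : n x n diagonal matrix with diag(d_mu) = diag(1, hat T_mu);
   its i-th row/column corresponds to coordinate nu = i+1 *)
Definition hatT (N mu : nat) : Mat :=
  fun i j => if Nat.eqb i j then dvec N mu (S i) else 0.

Definition blk (c : R) (M : Mat) : Mat :=
  fun i j => match i, j with
             | O, O => 1
             | S i', S j' => c * M i' j'
             | _, _ => 0
             end.

Definition hsPhi (N : nat) (lam : R) (mu : nat) : Mat := blk lam (hatT N mu).
Definition hsE (N : nat) (tau : R) (mu : nat) : Mat :=
  fun i j => / 2 ^ N * blk tau (hatT N mu) i j.

Definition matmul (d : nat) (A B : Mat) : Mat :=
  fun i j => sumR d (fun k => A i k * B k j).
Definition transp (A : Mat) : Mat := fun i j => A j i.
Definition inner (d : nat) (X Y : Mat) : R :=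
  sumR d (fun i => sumR d (fun j => X i j * Y i j)).
(* v (x) w = v w^t *)
Definition outer (v w : Vec) : Mat := fun i j => v i * w j.
Definition meq (d : nat) (X Y : Mat) : Prop :=
  forall i j, (i < d)%nat -> (j < d)%nat -> X i j = Y i j.

Definition minor (A : Mat) (j : nat) : Mat :=
  fun i k => A (S i) (if Nat.ltb k j then k else S k).
Fixpoint det (n : nat) (A : Mat) : R :=
  match n with
  | O => 1
  | S m => sumR (S m) (fun j => (-1) ^ j * A O j * det m (minor A j))
  end.

Definition SOn (n : nat) (M : Mat) : Prop :=
  (forall i j, (i < n)%nat -> (j < n)%nat ->
     sumR n (fun k => M k i * M k j) = if Nat.eqb i j then 1 else 0)
  /\ det n M = 1.

Definition conv (d : nat) (S : Mat -> Prop) (X : Mat) : Prop :=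
  exists (m : nat) (w : nat -> R) (Z : nat -> Mat),
    (forall k, (k < m)%nat -> 0 <= w k /\ S (Z k)) /\
    sumR m w = 1 /\
    meq d X (fun i j => sumR m (fun k => w k * Z k i j)).

Definition inOmega (n : nat) (v : Vec) : Prop :=
  v O = 1 /\ sumR n (fun i => v (S i) ^ 2) <= 1.

Definition OmegaMin (N : nat) (X : Mat) : Prop :=
  conv (hsdim N)
    (fun Y => exists v w, inOmega (hsn N) v /\ inOmega (hsn N) w /\
                          meq (hsdim N) Y (outer v w)) X.

Definition calT (n : nat) (T : Mat) : Prop :=
  T O O = 1 /\ (forall j, (1 <= j <= n)%nat -> T O j = 0 /\ T j O = 0) /\
  SOn n (fun i j => T (S i) (S j)).

Definition OmegaAB (N : nat) (lam : R) (X : Mat) : Prop :=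
  conv (hsdim N)
    (fun Y => OmegaMin N Y \/
       exists T T', calT (hsn N) T /\ calT (hsn N) T' /\
         meq (hsdim N) Y
           (matmul (hsdim N) (matmul (hsdim N) T (hsPhi N lam O)) (transp T'))) X.

Definition inEAB (N : nat) (lam : R) (E : Mat) : Prop :=
  forall X, OmegaAB N lam X -> 0 <= inner (hsdim N) E X <= 1.

Definition uvec : Vec := fun i => if Nat.eqb i O then 1 else 0.

Definition log2 (x : R) : R := ln x / ln 2.

Definition xlog (x : R) : R := if Req_EM_T x 0 then 0 else x * log2 x.
Definition hbin (p : R) : R := - xlog p - xlog (1 - p).
Definition plogq (a b : R) : R := if Req_EM_T a 0 then 0 else a * log2 (a / b).

Definition MI (m : nat) (p : nat -> nat -> R) : R :=
  sumR m (fun x => sumR m (fun y =>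
    plogq (p x y) (sumR m (fun y' => p x y') * sumR m (fun x' => p x' y)))).

Definition hsJoint (N : nat) (lam tau : R) : nat -> nat -> R :=
  fun x y => / 2 ^ N * inner (hsdim N) (hsE N tau y) (hsPhi N lam x).

(** The states [phi_x] and effects [E_y] are diagonal, with diagonals given by the
    characters [d_mu] of (Z/2)^N, which are orthogonal and sum to [2^N e_0].  This
    yields [sum_mu E_mu = u u^t] and [E_y . phi_x = lam tau [y = x] + 2^-N (1 - lam tau)],
    so the channel is symmetric and its mutual information has the stated closed form.
    For (a), the states [T phi_0] with [T = diag(1, 1, ..., 1)] and
    [T = diag(1, 1, -1, ..., -1)] lie in [Omega_AB] (the latter is in [SO(n)] because
    [n - 1 = 2^N - 2] is even), and [E_0] is nonnegative on them exactly when
    [1 + (2^N - 1) lam tau >= 0] and [1 - (2^N - 3) lam tau >= 0]. *)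

From Stdlib Require Import Reals Lra Lia.
Open Scope R_scope.

Lemma sumR_ext n f g : (forall i, (i < n)%nat -> f i = g i) -> sumR n f = sumR n g.
Proof.
  induction n as [|n IH]; intros H; simpl; [reflexivity|].
  rewrite IH by (intros; apply H; lia). rewrite H by lia. reflexivity.
Qed.

Lemma sumR_add n f g : sumR n (fun i => f i + g i) = sumR n f + sumR n g.
Proof. induction n as [|n IH]; simpl; [lra|]. rewrite IH; lra. Qed.

Lemma sumR_scal n c f : sumR n (fun i => c * f i) = c * sumR n f.
Proof. induction n as [|n IH]; simpl; [lra|]. rewrite IH; lra. Qed.

Lemma sumR_const n c : sumR n (fun _ => c) = INR n * c.
Proof. induction n as [|n IH]; simpl sumR; [simpl; lra|]. rewrite IH, S_INR; lra. Qed.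

Lemma sumR_eq0 n f : (forall i, (i < n)%nat -> f i = 0) -> sumR n f = 0.
Proof. intros H. rewrite (sumR_ext n f (fun _ => 0)), sumR_const by auto. lra. Qed.

Lemma sumR_single n f i : (i < n)%nat ->
  (forall j, (j < n)%nat -> j <> i -> f j = 0) -> sumR n f = f i.
Proof.
  induction n as [|n IH]; intros Hi H; [lia|]. simpl.
  destruct (Nat.eq_dec i n) as [->|Hne].
  - rewrite sumR_eq0; [lra|]. intros j Hj; apply H; lia.
  - rewrite IH, (H n) by (try lia; intros; apply H; lia). lra.
Qed.

Lemma sumR_kronecker n x a b : (x < n)%nat ->
  sumR n (fun y => if Nat.eqb y x then a else b) = a + (INR n - 1) * b.
Proof.
  intros Hx.
  rewrite (sumR_ext n _ (fun y => b + (if Nat.eqb y x then a - b else 0))).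
  2:{ intros i _. destruct (Nat.eqb i x); lra. }
  rewrite sumR_add, sumR_const, (sumR_single n _ x Hx), Nat.eqb_refl; [lra|].
  intros j _ Hj. apply Nat.eqb_neq in Hj. rewrite Hj; reflexivity.
Qed.

Lemma sumR_succ_l n f : sumR (S n) f = f O + sumR n (fun i => f (S i)).
Proof. induction n as [|n IH]; simpl in *; [lra|]. rewrite IH; lra. Qed.

Lemma sumR_add_range a b f :
  sumR (a + b) f = sumR a f + sumR b (fun k => f (k + a)%nat).
Proof.
  induction b as [|b IH]; simpl; [rewrite Nat.add_0_r; lra|].
  rewrite Nat.add_succ_r; simpl. rewrite IH, (Nat.add_comm b a); lra.
Qed.

(** * Characters of (Z/2)^N *)

Lemma testbit_high N a k : (a < 2 ^ N)%nat -> (N <= k)%nat -> Nat.testbit a k = false.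
Proof.
  intros Ha Hk. rewrite Nat.testbit_eqb, Nat.div_small; [reflexivity|].
  pose proof (Nat.pow_le_mono_r 2 N k ltac:(lia) Hk). lia.
Qed.

Lemma dvec_S N mu nu : dvec (S N) mu nu =
  dvec N mu nu * (if (Nat.testbit mu N && Nat.testbit nu N)%bool then -1 else 1).
Proof.
  unfold dvec, bdot. simpl bcount. rewrite Nat.odd_add, Nat.land_spec.
  destruct (Nat.odd (bcount N (Nat.land mu nu))), (Nat.testbit mu N), (Nat.testbit nu N);
    simpl; lra.
Qed.

Lemma dvec_ext_r N mu a b : (forall k, (k < N)%nat -> Nat.testbit a k = Nat.testbit b k) ->
  dvec N mu a = dvec N mu b.
Proof.
  induction N as [|N IH]; intros H; [reflexivity|].
  rewrite !dvec_S, IH, (H N) by (try lia; intros; apply H; lia); reflexivity.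
Qed.

Lemma dvec_comm N mu nu : dvec N mu nu = dvec N nu mu.
Proof. unfold dvec, bdot. rewrite Nat.land_comm. reflexivity. Qed.

Lemma dvec_mul_lxor N x y nu : dvec N x nu * dvec N y nu = dvec N (Nat.lxor x y) nu.
Proof.
  induction N as [|N IH]; [unfold dvec; simpl; lra|].
  rewrite !dvec_S, <- IH, Nat.lxor_spec.
  destruct (Nat.testbit x N), (Nat.testbit y N), (Nat.testbit nu N); simpl; ring.
Qed.

Lemma dvec_0_r N mu : dvec N mu 0 = 1.
Proof.
  unfold dvec, bdot. rewrite Nat.land_0_r.
  assert (H0 : bcount N 0 = 0%nat)
    by (induction N as [|N IH]; simpl; [|rewrite IH, Nat.bits_0]; reflexivity).
  rewrite H0. reflexivity.
Qed.

Lemma dvec_0_l N nu : dvec N 0 nu = 1.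
Proof. rewrite dvec_comm. apply dvec_0_r. Qed.

(* Splitting [{0,1}^(N+1)] according to the top bit of [nu]. *)
Lemma sumR_dvec_S N mu : sumR (2 ^ S N) (dvec (S N) mu) =
  (if Nat.testbit mu N then 0 else 2) * sumR (2 ^ N) (dvec N mu).
Proof.
  replace (2 ^ S N)%nat with (2 ^ N + 2 ^ N)%nat by (simpl; lia).
  rewrite sumR_add_range.
  rewrite (sumR_ext _ (dvec (S N) mu) (dvec N mu)).
  2:{ intros i Hi. rewrite dvec_S, (testbit_high N i N Hi), Bool.andb_false_r by lia. lra. }
  rewrite (sumR_ext _ (fun k => dvec (S N) mu (k + 2 ^ N)%nat)
             (fun nu => (if Nat.testbit mu N then -1 else 1) * dvec N mu nu)).
  2:{ intros i Hi.
      assert (Htop : Nat.testbit (i + 2 ^ N) N = true).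
      { apply (Nat.testbit_unique _ _ _ i 0); [exact Hi | simpl; lia]. }
      assert (Hlow : forall k, (k < N)%nat -> Nat.testbit (i + 2 ^ N) k = Nat.testbit i k).
      { intros k Hk. rewrite <- (Nat.mod_pow2_bits_low _ N k Hk).
        replace (i + 2 ^ N)%nat with (i + 1 * 2 ^ N)%nat by lia.
        rewrite Nat.Div0.mod_add, Nat.mod_small by exact Hi. reflexivity. }
      rewrite dvec_S, Htop, Bool.andb_true_r, (dvec_ext_r N mu _ i Hlow). lra. }
  rewrite sumR_scal. destruct (Nat.testbit mu N); lra.
Qed.

Lemma sumR_dvec_bit N mu k : (k < N)%nat -> Nat.testbit mu k = true ->
  sumR (2 ^ N) (dvec N mu) = 0.
Proof.
  induction N as [|N IH]; intros Hk Hb; [lia|].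
  rewrite sumR_dvec_S.
  destruct (Nat.eq_dec k N) as [->|Hne]; [rewrite Hb; lra|].
  rewrite IH by (auto; lia). lra.
Qed.

Lemma sumR_dvec N mu : (forall k, (N <= k)%nat -> Nat.testbit mu k = false) ->
  sumR (2 ^ N) (dvec N mu) = if Nat.eqb mu 0 then 2 ^ N else 0.
Proof.
  intros Hhigh. destruct (Nat.eqb_spec mu 0) as [->|Hmu].
  - rewrite (sumR_ext _ _ (fun _ => 1)) by (intros; apply dvec_0_l).
    rewrite sumR_const, pow_INR. replace (INR 2) with 2 by (simpl; lra). simpl. ring.
  - pose proof (Nat.bit_log2 mu Hmu) as Htop.
    apply (sumR_dvec_bit N mu (Nat.log2 mu)); [|exact Htop].
    destruct (Nat.lt_ge_cases (Nat.log2 mu) N) as [Hlt|Hge]; [exact Hlt|].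
    rewrite Hhigh in Htop by exact Hge. discriminate.
Qed.

Lemma sumR_dvec_orth N x y : (x < 2 ^ N)%nat -> (y < 2 ^ N)%nat ->
  sumR (2 ^ N) (fun nu => dvec N y nu * dvec N x nu) = if Nat.eqb y x then 2 ^ N else 0.
Proof.
  intros Hx Hy.
  rewrite (sumR_ext _ _ (dvec N (Nat.lxor y x))) by (intros; apply dvec_mul_lxor).
  rewrite sumR_dvec.
  - destruct (Nat.eqb_spec y x) as [->|Hne].
    + rewrite Nat.lxor_nilpotent. reflexivity.
    + destruct (Nat.eqb_spec (Nat.lxor y x) 0) as [Hz|]; [|reflexivity].
      exfalso. exact (Hne (proj1 (Nat.lxor_eq_0_iff y x) Hz)).
  - intros k Hk. rewrite Nat.lxor_spec, (testbit_high N y k), (testbit_high N x k) by auto.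
    reflexivity.
Qed.

(** * The states [phi_x] and effects [E_y] *)

Lemma INR_hsdim N : INR (hsdim N) = 2 ^ N.
Proof. unfold hsdim. rewrite pow_INR. replace (INR 2) with 2 by (simpl; lra). reflexivity. Qed.

Lemma hsdim_S N : hsdim N = S (hsn N).
Proof. unfold hsdim, hsn. pose proof (Nat.pow_nonzero 2 N ltac:(lia)). lia. Qed.

Lemma INR_hsn N : INR (hsn N) = 2 ^ N - 1.
Proof. rewrite <- INR_hsdim, hsdim_S, S_INR. lra. Qed.

Lemma pow2_ge_4 N : (2 <= N)%nat -> 4 <= 2 ^ N.
Proof. intros HN. replace 4 with (2 ^ 2) by lra. apply Rle_pow; [lra | exact HN]. Qed.

Definition diagonal (A : Mat) : Prop := forall i j, i <> j -> A i j = 0.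

Lemma hsPhi_diagonal N lam x : diagonal (hsPhi N lam x).
Proof.
  intros [|i] [|j] Hij; unfold hsPhi, blk, hatT; try reflexivity; [lia|].
  destruct (Nat.eqb_spec i j); [lia | ring].
Qed.

Lemma inner_diagonal_r d X Y : diagonal Y -> inner d X Y = sumR d (fun i => X i i * Y i i).
Proof.
  intros HY. apply sumR_ext. intros i Hi.
  apply (sumR_single d (fun j => X i j * Y i j) i Hi).
  intros j _ Hj. rewrite HY by auto. ring.
Qed.

Lemma hsE_sum_unit N tau :
  meq (hsdim N) (fun i j => sumR (hsdim N) (fun mu => hsE N tau mu i j)) (outer uvec uvec).
Proof.
  assert (HD : 2 ^ N <> 0) by (apply pow_nonzero; lra).
  intros [|i] [|j] Hi Hj; unfold hsE, blk, outer, uvec; cbn [Nat.eqb].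
  - rewrite sumR_const, INR_hsdim. field. exact HD.
  - rewrite sumR_eq0; [ring | intros; ring].
  - rewrite sumR_eq0; [ring | intros; ring].
  - unfold hatT. destruct (Nat.eqb_spec i j) as [->|]; [|rewrite sumR_eq0; [ring | intros; ring]].
    rewrite (sumR_ext _ _ (fun mu => / 2 ^ N * tau * dvec N (S j) mu))
      by (intros; rewrite dvec_comm; ring).
    unfold hsdim in *. rewrite sumR_scal, sumR_dvec by (intros; apply (testbit_high N); lia).
    simpl. ring.
Qed.

Lemma hsE_inner_hsPhi N lam tau x y : (x < hsdim N)%nat -> (y < hsdim N)%nat ->
  inner (hsdim N) (hsE N tau y) (hsPhi N lam x) =
    lam * tau * (if Nat.eqb y x then 1 else 0) + / 2 ^ N * (1 - lam * tau).
Proof.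
  intros Hx Hy. rewrite inner_diagonal_r by apply hsPhi_diagonal.
  rewrite (sumR_ext _ _ (fun nu => / 2 ^ N * (lam * tau) * (dvec N y nu * dvec N x nu)
                          + (if Nat.eqb nu 0 then / 2 ^ N * (1 - lam * tau) else 0))).
  2:{ intros [|i] _; unfold hsE, hsPhi, blk, hatT; cbn [Nat.eqb].
      - rewrite !dvec_0_r. ring.
      - rewrite Nat.eqb_refl. ring. }
  unfold hsdim in *.
  rewrite sumR_add, sumR_scal, sumR_dvec_orth, sumR_kronecker by (auto; lia).
  assert (HD : 2 ^ N <> 0) by (apply pow_nonzero; lra).
  destruct (Nat.eqb y x); field; exact HD.
Qed.

(** * Bounds on [lam tau] from positivity of [E_0] *)

Fixpoint prodR (n : nat) (f : nat -> R) : R :=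
  match n with O => 1 | S m => f O * prodR m (fun i => f (S i)) end.

Lemma prodR_ext n f g : (forall i, f i = g i) -> prodR n f = prodR n g.
Proof.
  revert f g; induction n as [|n IH]; intros f g H; simpl; [reflexivity|].
  rewrite H, (IH _ (fun i => g (S i))); auto.
Qed.

Lemma prodR_const n c : prodR n (fun _ => c) = c ^ n.
Proof. induction n as [|n IH]; simpl; [reflexivity|]. rewrite IH; reflexivity. Qed.

Lemma det_diagonal n A : diagonal A -> det n A = prodR n (fun i => A i i).
Proof.
  revert A; induction n as [|n IH]; intros A HA; [reflexivity|].
  change (det (S n) A) with (sumR (S n) (fun j => (-1) ^ j * A O j * det n (minor A j))).
  rewrite (sumR_single (S n) _ O ltac:(lia)).
  - rewrite IH by (intros i j Hij; apply HA; unfold Nat.ltb; simpl; lia).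
    rewrite (prodR_ext n _ (fun i => A (S i) (S i))) by reflexivity. simpl. ring.
  - intros j _ Hj. rewrite HA by auto. ring.
Qed.

Definition diagM (g : Vec) : Mat := fun i j => if Nat.eqb i j then g i else 0.

Lemma diagM_diagonal g : diagonal (diagM g).
Proof. intros i j Hij. unfold diagM. apply Nat.eqb_neq in Hij. rewrite Hij. reflexivity. Qed.

Lemma diagM_diag g i : diagM g i i = g i.
Proof. unfold diagM. rewrite Nat.eqb_refl. reflexivity. Qed.

Lemma calT_diagM n g : g O = 1 -> (forall i, (i < n)%nat -> g (S i) * g (S i) = 1) ->
  prodR n (fun i => g (S i)) = 1 -> calT n (diagM g).
Proof.
  intros H0 Hsq Hprod. split; [exact H0|]. split; [intros [|j] Hj; [lia | split; reflexivity]|].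
  split.
  - intros i j Hi Hj.
    rewrite (sumR_single n _ i Hi).
    + rewrite !diagM_diag. fold (diagM g (S i) (S j)).
      destruct (Nat.eqb_spec i j) as [->|Hne]; [rewrite diagM_diag; auto|].
      rewrite diagM_diagonal by congruence. ring.
    + intros k _ Hk. rewrite (diagM_diagonal g (S k) (S i)) by congruence. ring.
  - rewrite det_diagonal by (intros i j Hij; apply diagM_diagonal; congruence).
    rewrite <- Hprod. apply prodR_ext. intros i. apply diagM_diag.
Qed.

Lemma matmul_diagonal_l d A B i j : diagonal A -> (i < d)%nat ->
  matmul d A B i j = A i i * B i j.
Proof.
  intros HA Hi. apply (sumR_single d (fun k => A i k * B k j) i Hi).
  intros k _ Hk. rewrite HA by auto. ring.
Qed.

Lemma matmul_diagonal_r d A B i j : diagonal B -> (j < d)%nat ->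
  matmul d A B i j = A i j * B j j.
Proof.
  intros HB Hj. apply (sumR_single d (fun k => A i k * B k j) j Hj).
  intros k _ Hk. rewrite HB by auto. ring.
Qed.

Lemma conv_singleton d (S : Mat -> Prop) X : S X -> conv d S X.
Proof.
  intros HX. exists 1%nat, (fun _ => 1), (fun _ => X).
  split; [intros k _; split; [lra | exact HX]|]. split; [simpl; ring|].
  intros i j _ _. simpl. ring.
Qed.

Definition phi0_twisted (N : nat) (lam : R) (g : Vec) : Mat :=
  matmul (hsdim N) (matmul (hsdim N) (diagM g) (hsPhi N lam O)) (transp (diagM (fun _ => 1))).

Lemma phi0_twisted_entry N lam g i j : (i < hsdim N)%nat -> (j < hsdim N)%nat ->
  phi0_twisted N lam g i j = g i * hsPhi N lam O i j.
Proof.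
  intros Hi Hj. unfold phi0_twisted.
  rewrite matmul_diagonal_r, matmul_diagonal_l; auto using diagM_diagonal.
  - unfold transp. rewrite !diagM_diag. ring.
  - intros a b Hab. apply diagM_diagonal. auto.
Qed.

Lemma OmegaAB_phi0_twisted N lam g :
  calT (hsn N) (diagM g) -> OmegaAB N lam (phi0_twisted N lam g).
Proof.
  intros HT. apply conv_singleton. right.
  exists (diagM g), (diagM (fun _ => 1)). split; [exact HT|]. split; [|intros i j _ _; reflexivity].
  apply calT_diagM; [reflexivity | intros; ring |]. rewrite prodR_const. apply pow1.
Qed.

Lemma hsE0_inner_phi0_twisted N lam tau g : g O = 1 ->
  inner (hsdim N) (hsE N tau O) (phi0_twisted N lam g) =
    / 2 ^ N * (1 + lam * tau * sumR (hsn N) (fun i => g (S i))).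
Proof.
  intros H0. unfold inner.
  rewrite (sumR_ext _ _ (fun i => hsE N tau O i i * (g i * hsPhi N lam O i i))).
  2:{ intros i Hi.
      rewrite (sumR_ext _ _ (fun j => hsE N tau O i j * (g i * hsPhi N lam O i j)))
        by (intros; rewrite phi0_twisted_entry; auto).
      apply (sumR_single _ (fun j => hsE N tau O i j * (g i * hsPhi N lam O i j)) i Hi).
      intros j _ Hj. rewrite hsPhi_diagonal by auto. ring. }
  rewrite hsdim_S, sumR_succ_l.
  rewrite (sumR_ext _ _ (fun i => / 2 ^ N * (lam * tau) * g (S i))).
  2:{ intros i _. unfold hsE, hsPhi, blk, hatT. rewrite Nat.eqb_refl, dvec_0_l. ring. }
  rewrite sumR_scal. unfold hsE, hsPhi, blk. rewrite H0. ring.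
Qed.

Definition flip_tail (i : nat) : R := if Nat.leb i 1 then 1 else -1.

Lemma calT_flip_tail N : (2 <= N)%nat -> calT (hsn N) (diagM flip_tail).
Proof.
  intros HN.
  assert (Hn : hsn N = S (2 * (2 ^ (N - 1) - 1))).
  { unfold hsn. destruct N as [|M]; [lia|]. replace (S M - 1)%nat with M by lia.
    pose proof (Nat.pow_nonzero 2 M ltac:(lia)). simpl. lia. }
  apply calT_diagM; [reflexivity | intros [|i] _; cbn; ring |].
  rewrite Hn. cbn [prodR].
  rewrite (prodR_ext _ _ (fun _ => -1)) by reflexivity.
  rewrite prodR_const, pow_1_even. cbn. ring.
Qed.

Lemma hsE0_effect_bounds N lam tau : (2 <= N)%nat -> inEAB N lam (hsE N tau O) ->
  - (1 / (2 ^ N - 1)) <= lam * tau <= 1 / (2 ^ N - 3).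
Proof.
  intros HN HE. pose proof (pow2_ge_4 N HN) as HD.
  assert (Hones : calT (hsn N) (diagM (fun _ => 1))).
  { apply calT_diagM; [reflexivity | intros; ring |]. rewrite prodR_const. apply pow1. }
  destruct (HE _ (OmegaAB_phi0_twisted N lam _ Hones)) as [Hlow _].
  destruct (HE _ (OmegaAB_phi0_twisted N lam _ (calT_flip_tail N HN))) as [Hup _].
  rewrite hsE0_inner_phi0_twisted, sumR_const, INR_hsn in Hlow by reflexivity.
  rewrite hsE0_inner_phi0_twisted in Hup by reflexivity.
  rewrite (sumR_ext _ _ (fun i => if Nat.eqb i 0 then 1 else -1)) in Hup
    by (intros [|i] _; reflexivity).
  assert (Hn0 : (0 < hsn N)%nat) by (apply INR_lt; rewrite INR_hsn; simpl; lra).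
  rewrite sumR_kronecker, INR_hsn in Hup by exact Hn0.
  set (D := 2 ^ N) in *. set (lt := lam * tau) in *.
  assert (HiD : 0 < / D) by (apply Rinv_0_lt_compat; lra).
  assert (Hlow' : 0 <= 1 + lt * (D - 1)) by nra.
  assert (Hup' : 0 <= 1 - lt * (D - 3)) by nra.
  split.
  - apply (Rmult_le_reg_r (D - 1)); [lra|].
    replace (- (1 / (D - 1)) * (D - 1)) with (-1) by (field; lra). lra.
  - apply (Rmult_le_reg_r (D - 3)); [lra|].
    replace (1 / (D - 3) * (D - 3)) with 1 by (field; lra). lra.
Qed.

(** * Mutual information of the symmetric channel *)

Lemma MI_ext m p q : (forall x y, (x < m)%nat -> (y < m)%nat -> p x y = q x y) ->
  MI m p = MI m q.
Proof.
  intros H. unfold MI. apply sumR_ext. intros x Hx. apply sumR_ext. intros y Hy.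
  rewrite H, (sumR_ext _ (fun y' => p x y') (fun y' => q x y')),
    (sumR_ext _ (fun x' => p x' y) (fun x' => q x' y)) by auto.
  reflexivity.
Qed.

Lemma MI_kronecker m a b : (0 < m)%nat ->
  let c := a + (INR m - 1) * b in
  MI m (fun x y => if Nat.eqb y x then a else b) =
    INR m * (plogq a (c * c) + (INR m - 1) * plogq b (c * c)).
Proof.
  intros Hm c. unfold MI.
  rewrite (sumR_ext _ _ (fun _ => plogq a (c * c) + (INR m - 1) * plogq b (c * c))).
  { apply sumR_const. }
  intros x Hx.
  rewrite <- (sumR_kronecker m x (plogq a (c * c)) (plogq b (c * c)) Hx).
  apply sumR_ext. intros y Hy.
  rewrite (sumR_kronecker m x a b Hx).
  rewrite (sumR_ext _ _ (fun x' => if Nat.eqb x' y then a else b))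
    by (intros; rewrite Nat.eqb_sym; reflexivity).
  rewrite (sumR_kronecker m y a b Hy).
  destruct (Nat.eqb y x); reflexivity.
Qed.

Lemma plogq_scale c p b : 0 < c -> 0 < b -> 0 <= p ->
  plogq (p * c) b = c * xlog p + p * c * log2 (c / b).
Proof.
  intros Hc Hb Hp. unfold plogq, xlog.
  destruct (Req_EM_T (p * c) 0) as [E|E], (Req_EM_T p 0) as [E2|E2].
  - subst. ring.
  - exfalso. apply E2. destruct (Rmult_integral _ _ E); [assumption | lra].
  - subst. lra.
  - replace (p * c / b) with (p * (c / b)) by (field; lra).
    unfold log2. rewrite ln_mult by (try apply Rdiv_lt_0_compat; lra).
    assert (Hln2 : 0 < ln 2) by (rewrite <- ln_1; apply ln_increasing; lra).
    field. lra.
Qed.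

Lemma MI_hsJoint N lam tau : (2 <= N)%nat ->
  - (1 / (2 ^ N - 1)) <= lam * tau <= 1 ->
  let P := / 2 ^ N * (1 + (2 ^ N - 1) * (lam * tau)) in
  MI (hsdim N) (hsJoint N lam tau) = INR N - hbin P - (1 - P) * log2 (2 ^ N - 1).
Proof.
  intros HN [Hlow Hup] P.
  pose proof (pow2_ge_4 N HN) as HD4.
  assert (HPdef : P = / 2 ^ N * (1 + (2 ^ N - 1) * (lam * tau))) by reflexivity.
  clearbody P. set (D := 2 ^ N) in *. set (lt := lam * tau) in *.
  assert (HiD : 0 < / D) by (apply Rinv_0_lt_compat; lra).
  assert (HP0 : 0 <= P).
  { rewrite HPdef. apply Rmult_le_pos; [lra|].
    apply (Rmult_le_compat_l (D - 1)) in Hlow; [|lra].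
    replace ((D - 1) * - (1 / (D - 1))) with (-1) in Hlow by (field; lra). lra. }
  assert (HQ0 : 0 <= 1 - P).
  { replace (1 - P) with ((D - 1) * (1 - lt) * / D) by (rewrite HPdef; field; lra).
    apply Rmult_le_pos; [nra | lra]. }
  rewrite (MI_ext _ _ (fun x y => if Nat.eqb y x then P * / D else (1 - P) * / (D * (D - 1)))).
  2:{ intros x y Hx Hy. unfold hsJoint. rewrite hsE_inner_hsPhi by auto. fold D lt.
      rewrite HPdef. destruct (Nat.eqb y x); field; lra. }
  rewrite MI_kronecker by (rewrite hsdim_S; lia).
  rewrite INR_hsdim. fold D.
  replace (P * / D + (D - 1) * ((1 - P) * / (D * (D - 1)))) with (/ D) by (field; lra).
  rewrite !plogq_scale by (try apply Rinv_0_lt_compat; nra).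
  replace (/ D / (/ D * / D)) with D by (field; lra).
  replace (/ (D * (D - 1)) / (/ D * / D)) with (D * / (D - 1)) by (field; lra).
  assert (Hln2 : 0 < ln 2) by (rewrite <- ln_1; apply ln_increasing; lra).
  unfold hbin, log2. rewrite ln_mult, ln_Rinv by (try apply Rinv_0_lt_compat; lra).
  unfold D. rewrite ln_pow by lra. fold D.
  field. split; lra.
Qed.

Theorem mainTheorem13 (N : nat) (lam tau : R) :
  (2 <= N)%nat -> -1 <= lam <= 1 -> -1 <= tau <= 1 ->
  meq (hsdim N) (fun i j => sumR (hsdim N) (fun mu => hsE N tau mu i j))
      (outer uvec uvec) /\
  (inEAB N lam (hsE N tau O) ->
     - (1 / (2 ^ N - 1)) <= lam * tau <= 1 / (2 ^ N - 3)) /\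
  (forall x y, (x < hsdim N)%nat -> (y < hsdim N)%nat ->
     inner (hsdim N) (hsE N tau y) (hsPhi N lam x) =
       lam * tau * (if Nat.eqb y x then 1 else 0) + / 2 ^ N * (1 - lam * tau)) /\
  ((forall y, (y < hsdim N)%nat -> inEAB N lam (hsE N tau y)) ->
     let P := / 2 ^ N * (1 + (2 ^ N - 1) * (lam * tau)) in
     MI (hsdim N) (hsJoint N lam tau) =
       INR N - hbin P - (1 - P) * log2 (2 ^ N - 1)).
Proof.
  intros HN Hlam Htau.
  split; [apply hsE_sum_unit|].
  split; [apply hsE0_effect_bounds; exact HN|].
  split; [intros; apply hsE_inner_hsPhi; assumption|].
  intros HE. apply MI_hsJoint; [exact HN|]. split.
  - apply (hsE0_effect_bounds N lam tau HN), HE. rewrite hsdim_S. lia.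
  - destruct Hlam, Htau. nra.
Qed.
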